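(* Let $k\ge 7$. Then there is a finite group $H$ with an elementary abelian $2$-subgroup $1\ne M\trianglelefteq H$ such that $H/M\cong A_k$, the extension $1\to M\to H\to A_k\to 1$ is nonsplit, and $H$ has a faithful transitive permutation representation of degree at most $2k(k-1)$.
   Context: An extension is nonsplit if $M$ has no complement in $H$. *)

From mathcomp Require Export all_boot all_fingroup all_solvable.
Set Implicit Arguments. Unset Strict Implicit. Unset Printing Implicit Defensive.

Local Open Scope group_scope.
Set Implicit Arguments. Unset Strict Implicit. Unset Printing Implicit Defensive.

(* Let T be the set of signed ordered pairs ((i, j), b) of distinct points of
   {0, ..., n-1}, and let H be the group of permutations of T of the form
   (w, b) |-> (s w, b + c w) with s even and c w + c w' = 1 exactly when s
   reverses the order of w = (i, j), where w' = (j, i) (coherent s c).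
   Forgetting c maps H onto A_n with kernel the sign functions constant on
   unordered pairs, an elementary abelian 2-group.  A lift of (0 1)(2 3) swaps (0, 1) and (1, 0),
   so its square adds c w + c w' = 1 to the sign at w = (0, 1): the involution
   has no involutive lift, and the extension cannot split.  H acts faithfully
   and transitively on T, of size 2 n (n - 1); all this only needs n >= 4. *)

Lemma ltn_neqC (i j : nat) : i != j -> (j < i) = ~~ (i < j).
Proof. by move=> ne; rewrite ltnNge leq_eqVlt (negbTE ne). Qed.

Lemma nonsplit_of_involution (gT rT : finGroupType) (G : {group gT})
    (f : {morphism G >-> rT}) (t : rT) :
  t \in f @* G -> t * t = 1 -> (forall y, y \in G -> f y = t -> y * y != 1) ->
  ~~ [splits G, over 'ker f].
Proof.
move=> tG tt no_lift; apply/splitsP => -[K /complP[tiMK defG]].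
have sKG : K \subset G by rewrite -defG mulG_subr.
have fK : f @* ('ker f * K) = f @* K.
  by rewrite morphimMl ?(normal_sub (ker_normal f)) // morphim_ker mul1g.
have /morphimP[y Gy Ky fy] : t \in f @* K by rewrite -fK defG.
have yyM : y * y \in 'ker f by apply/kerP; rewrite ?groupM // morphM // -fy tt.
have yy1 : y * y = 1 by apply/set1gP; rewrite -tiMK inE yyM groupM.
by move: (no_lift y Gy (esym fy)); rewrite yy1 eqxx.
Qed.

Section SignedPairs.

Variable n : nat.

Definition opair := {u : 'I_n * 'I_n | dpair u}.

Implicit Types (c d : {ffun opair -> bool}) (s t : {perm 'I_n}) (w : opair).

Lemma opair_act_subproof s w : dpair (s (val w).1, s (val w).2).
Proof. by rewrite /= (inj_eq perm_inj); case: w. Qed.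

Definition opair_act s w : opair :=
  Sub (s (val w).1, s (val w).2) (opair_act_subproof s w).

Lemma opair_rev_subproof w : dpair ((val w).2, (val w).1).
Proof. by rewrite /= eq_sym; case: w. Qed.

Definition opair_rev w : opair :=
  Sub ((val w).2, (val w).1) (opair_rev_subproof w).

Lemma opair_act1 w : opair_act 1 w = w.
Proof. by apply: val_inj; rewrite /= !perm1; case: (val w). Qed.

Lemma opair_actM s t w : opair_act (s * t) w = opair_act t (opair_act s w).
Proof. by apply: val_inj; rewrite /= !permM. Qed.

Lemma opair_actK s : cancel (opair_act s) (opair_act s^-1).
Proof. by move=> w; rewrite -opair_actM mulgV opair_act1. Qed.

Lemma opair_act_inj s : injective (opair_act s).
Proof. exact: can_inj (opair_actK s). Qed.

Lemma opair_revK : involutive opair_rev.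
Proof. by move=> w; apply: val_inj; rewrite /=; case: (val w). Qed.

Lemma opair_rev_inj : injective opair_rev.
Proof. exact: inv_inj opair_revK. Qed.

Lemma opair_rev_act s w : opair_rev (opair_act s w) = opair_act s (opair_rev w).
Proof. exact: val_inj. Qed.

Definition inverts s w : bool :=
  ((val w).1 < (val w).2) (+) (s (val w).1 < s (val w).2).

Lemma inverts1 w : inverts 1 w = false.
Proof. by rewrite /inverts !perm1 addbb. Qed.

Lemma invertsM s t w :
  inverts (s * t) w = inverts s w (+) inverts t (opair_act s w).
Proof. by rewrite /inverts /= !permM addbA addbK. Qed.

Lemma inverts_rev s w : inverts s (opair_rev w) = inverts s w.
Proof.
case: w => [[i j] /= ij]; have sij : s i != s j by rewrite (inj_eq perm_inj).
by rewrite /inverts /= (ltn_neqC ij) (ltn_neqC sij) addbN addNb negbK.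
Qed.

Lemma inverts_swap s w : opair_act s w = opair_rev w -> inverts s w.
Proof.
case: w => [[i j] /= ij] /(congr1 val) [si sj].
by rewrite /inverts /= si sj (ltn_neqC ij) addbN addbb.
Qed.

Definition spair := (opair * bool)%type.

Definition sign_fun s c (x : spair) : spair :=
  (opair_act s x.1, x.2 (+) c x.1).

Lemma sign_fun_inj s c : injective (sign_fun s c).
Proof.
move=> [w1 b1] [w2 b2] e; have /= ew := opair_act_inj (congr1 fst e).
by move: (congr1 snd e); rewrite /= ew => /addIb ->.
Qed.

Definition sign_perm s c : {perm spair} := perm (@sign_fun_inj s c).

Lemma sign_permE s c x : sign_perm s c x = (opair_act s x.1, x.2 (+) c x.1).
Proof. by rewrite permE. Qed.

Definition signs (p : {perm spair}) : {ffun opair -> bool} :=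
  [ffun w : opair => (p (w, false)).2].

Lemma signs_sign_perm s c : signs (sign_perm s c) = c.
Proof. by apply/ffunP => w; rewrite ffunE sign_permE. Qed.

Lemma sign_perm1 : sign_perm 1 [ffun => false] = 1.
Proof. by apply/permP => -[w b]; rewrite sign_permE opair_act1 ffunE addbF perm1. Qed.

Lemma sign_permM s t c d :
  sign_perm s c * sign_perm t d =
  sign_perm (s * t) [ffun w : opair => c w (+) d (opair_act s w)].
Proof.
by apply/permP => -[w b]; rewrite permM !sign_permE opair_actM ffunE addbA.
Qed.

Lemma sign_perm_inj_perm s t c d :
  1 < n -> sign_perm s c = sign_perm t d -> s = t.
Proof.
move=> n_gt1 e; apply/permP => i.
have [j ij] : exists j : 'I_n, i != j.
  have [i0|i_neq0] := eqVneq (val i) 0.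
    by exists (Ordinal n_gt1); rewrite -val_eqE i0.
  by exists (Ordinal (ltnW n_gt1)); rewrite -val_eqE.
have := congr1 (fun p : {perm spair} => (val (p (Sub (i, j) ij, false)).1).1) e.
by rewrite !sign_permE.
Qed.

Definition coherent s c :=
  [forall w, c w (+) c (opair_rev w) == inverts s w].

Lemma coherentP s c :
  reflect (forall w, c w (+) c (opair_rev w) = inverts s w) (coherent s c).
Proof. by apply: (iffP forallP) => e w; apply/eqP; apply: e. Qed.

Lemma coherent1 : coherent 1 [ffun => false].
Proof. by apply/coherentP => w; rewrite !ffunE inverts1. Qed.

Lemma coherentM s t c d : coherent s c -> coherent t d ->
  coherent (s * t) [ffun w : opair => c w (+) d (opair_act s w)].
Proof.
move=> /coherentP cs /coherentP dt; apply/coherentP => w.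
by rewrite !ffunE -opair_rev_act addbACA cs dt invertsM.
Qed.

Definition std_signs s : {ffun opair -> bool} :=
  [ffun w : opair => ((val w).1 < (val w).2) && inverts s w].

Lemma coherent_std s : coherent s (std_signs s).
Proof.
apply/coherentP => -[[i j] /= ij].
rewrite !ffunE inverts_rev /= (@ltn_neqC i j ij).
by case: (i < j); rewrite /= ?addbF.
Qed.

Definition toggle w0 b c : {ffun opair -> bool} :=
  [ffun w => c w (+) b && ((w == w0) || (w == opair_rev w0))].

Lemma toggle_at w0 b c : toggle w0 b c w0 = c w0 (+) b.
Proof. by rewrite ffunE eqxx andbT. Qed.

Lemma coherent_toggle s w0 b c : coherent s c -> coherent s (toggle w0 b c).
Proof.
move/coherentP => cs; apply/coherentP => w; rewrite !ffunE addbACA cs.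
rewrite (inj_eq opair_rev_inj) (can2_eq opair_revK opair_revK).
by rewrite [X in b && X]orbC addbb addbF.
Qed.

(* An element of H is stored together with its image in A_n, so that the
   quotient map is the second projection. *)
Definition lifts : {set {perm spair} * {perm 'I_n}} :=
  [set x | [&& x.2 \in 'Alt_('I_n), x.1 == sign_perm x.2 (signs x.1)
             & coherent x.2 (signs x.1)]].

Lemma liftsP x : reflect
  (exists s c, [/\ s \in 'Alt_('I_n), coherent s c & x = (sign_perm s c, s)])
  (x \in lifts).
Proof.
rewrite inE; apply: (iffP and3P) => [[sA /eqP x1 cs] | [s [c [sA cs ->]]]].
  by exists x.2, (signs x.1); split=> //; rewrite -x1; case: (x).
by rewrite /= signs_sign_perm.
Qed.

Lemma mem_lifts s c :
  s \in 'Alt_('I_n) -> coherent s c -> (sign_perm s c, s) \in lifts.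
Proof. by move=> sA cs; apply/liftsP; exists s, c. Qed.

Lemma lift1 : (sign_perm 1 [ffun => false], 1) = 1 :> {perm spair} * {perm 'I_n}.
Proof. by rewrite sign_perm1. Qed.

Lemma lift_mul s t c d :
  (sign_perm s c, s) * (sign_perm t d, t) =
  (sign_perm (s * t) [ffun w : opair => c w (+) d (opair_act s w)], s * t).
Proof. by rewrite -sign_permM. Qed.

Lemma lifts_group_set : group_set lifts.
Proof.
apply/group_setP; split; first by rewrite -lift1 mem_lifts ?group1 ?coherent1.
move=> _ _ /liftsP[s [c [sA cs ->]]] /liftsP[t [d [tA dt ->]]].
by rewrite lift_mul mem_lifts ?groupM ?coherentM.
Qed.

Canonical lifts_group := Group lifts_group_set.

Definition lift_proj := restrm (subsetT lifts_group) (@snd_morphism _ _).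

Lemma mem_ker_lift x : (x \in 'ker lift_proj) = (x \in lifts) && (x.2 == 1).
Proof.
apply/idP/andP => [xK | [xH /eqP x2]]; last by apply/kerP.
by rewrite (dom_ker xK) (mker xK).
Qed.

Lemma ker_liftP x :
  reflect (exists2 c, coherent 1 c & x = (sign_perm 1 c, 1)) (x \in 'ker lift_proj).
Proof.
rewrite mem_ker_lift andbC.
apply: (iffP andP) => [[/eqP x2 /liftsP[s [c [_ cs ex]]]] | [c cs ->]].
  by exists c; rewrite ex /= in x2 *; rewrite -x2.
by rewrite mem_lifts ?group1.
Qed.

Lemma ker_lift_abelem : 2.-abelem ('ker lift_proj).
Proof.
have mul1 c d : (sign_perm 1 c, 1) * (sign_perm 1 d, 1) =
                (sign_perm 1 [ffun w : opair => c w (+) d w], 1 : {perm 'I_n}).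
  rewrite lift_mul mulg1; congr (sign_perm _ _, _).
  by apply/ffunP => w; rewrite !ffunE opair_act1.
apply/abelemP => //; split.
  apply/centsP => _ /ker_liftP[c _ ->] _ /ker_liftP[d _ ->]; rewrite /commute !mul1.
  by congr (sign_perm _ _, _); apply/ffunP => w; rewrite !ffunE addbC.
move=> _ /ker_liftP[c _ ->]; rewrite expgS expg1 mul1 -lift1.
by congr (sign_perm _ _, _); apply/ffunP => w; rewrite !ffunE addbb.
Qed.

Lemma ker_lift_neq1 : 1 < n -> 'ker lift_proj != 1.
Proof.
move=> n_gt1; pose w0 : opair := Sub (Ordinal (ltnW n_gt1), Ordinal n_gt1) isT.
pose c := toggle w0 true [ffun => false].
apply/trivgPn; exists (sign_perm 1 c, 1).
  by apply/ker_liftP; exists c; rewrite ?coherent_toggle ?coherent1.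
apply/eqP => /(congr1 (fun x : {perm spair} * {perm 'I_n} => (x.1 (w0, false)).2)).
by rewrite /= sign_permE toggle_at ffunE perm1.
Qed.

Lemma lift_proj_im : lift_proj @* lifts_group = 'Alt_('I_n).
Proof.
rewrite morphim_restrm setIid morphimEsub ?subsetT //; apply/setP => s.
apply/imsetP/idP => [[_ /liftsP[t [c [tA _ ->]]] ->] // | sA].
by exists (sign_perm s (std_signs s), s); rewrite ?mem_lifts ?coherent_std.
Qed.

Definition lift_fst := restrm (subsetT lifts_group) (@fst_morphism _ _).

Lemma injm_lift_fst : 1 < n -> 'injm lift_fst.
Proof.
move=> n_gt1; apply/injmP => _ _ /liftsP[s [c [_ _ ->]]] /liftsP[t [d [_ _ ->]]] /= e.
have st := sign_perm_inj_perm n_gt1 e.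
by move/(congr1 signs): e; rewrite st !signs_sign_perm => ->.
Qed.

Lemma card_opair : #|{: opair}| = (n * (n - 1))%N.
Proof.
have := cardC (@dpair _ : pred ('I_n * 'I_n)); rewrite card_prod card_ord.
have -> : #|[predC (@dpair _ : pred ('I_n * 'I_n))]| = n.
  rewrite -[RHS](card_ord n) -(card_image (f := fun i : 'I_n => (i, i))).
    2: by move=> i j [].
  apply: eq_card => -[i j]; rewrite !inE /= negbK.
  by apply/eqP/imageP => [-> | [k _ [-> ->]]] //; exists j.
by move/(congr1 (subn^~ n)); rewrite addnK card_sig mulnBr muln1 => <-.
Qed.

Lemma card_spair : #|{: spair}| = (2 * n * (n - 1))%N.
Proof. by rewrite card_prod card_opair card_bool mulnC mulnA. Qed.

Lemma lift_sqr_neq1 s c w :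
  opair_act s w = opair_rev w -> coherent s c ->
  (sign_perm s c, s) * (sign_perm s c, s) != 1.
Proof.
move=> sw /coherentP cs; rewrite lift_mul; apply/eqP.
move/(congr1 (fun x : {perm spair} * {perm 'I_n} => (x.1 (w, false)).2)).
by rewrite /= sign_permE ffunE sw cs inverts_swap ?perm1.
Qed.

Section FourPoints.

Hypothesis n_gt3 : 3 < n.

Let i0 : 'I_n := Ordinal (leq_ltn_trans (isT : 0 <= 3) n_gt3).
Let i1 : 'I_n := Ordinal (leq_ltn_trans (isT : 1 <= 3) n_gt3).
Let i2 : 'I_n := Ordinal (leq_ltn_trans (isT : 2 <= 3) n_gt3).
Let i3 : 'I_n := Ordinal n_gt3.
Let w01 : opair := Sub (i0, i1) isT.
Let tau := tperm i0 i1 * tperm i2 i3.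

Lemma opair_Alt_trans w w' : exists2 s, s \in 'Alt_('I_n) & opair_act s w = w'.
Proof.
have tr2 : [transitive^2 'Alt_('I_n), on setT | 'P].
  by apply: ntransitive_weak (Alt_trans _); rewrite card_ord -subn2 ltn_subRL.
have dtuple_opair (u : opair) : [tuple (val u).1; (val u).2] \in 2.-dtuple(setT).
  by case: u => [[i j] /= ij]; rewrite inE memtE subset_all /= !inE ?andbT.
have [s sA /(congr1 val) /= [e1 e2]] :=
  atransP2 tr2 (dtuple_opair w) (dtuple_opair w').
by exists s => //; apply: val_inj; rewrite /= [RHS]surjective_pairing e1 e2.
Qed.

Lemma lifts_nonsplit : ~~ [splits lifts_group, over 'ker lift_proj].
Proof.
have tauA : tau \in 'Alt_('I_n) by rewrite Alt_even odd_permM !odd_tperm.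
have tau2 : tau * tau = 1.
  have tC : commute (tperm i0 i1) (tperm i2 i3).
    by rewrite /commute conjgC tpermJ !tpermD.
  by rewrite /tau mulgA -(mulgA _ _ (tperm i0 i1)) -tC !mulgA tperm2 mul1g tperm2.
have tau_swap : opair_act tau w01 = opair_rev w01.
  by apply: val_inj; rewrite /= !permM /= tpermL tpermR !tpermD.
apply: (nonsplit_of_involution (t := tau)); rewrite ?lift_proj_im //.
move=> _ /liftsP[s [c [_ cs ->]]] st.
have {}st : s = tau := st.
by apply: (@lift_sqr_neq1 s c w01 _ cs); rewrite st.
Qed.

Lemma lift_fst_trans : [transitive lift_fst @* lifts_group, on [set: spair] | 'P].
Proof.
have <- : orbit 'P (lift_fst @* lifts_group) (w01, false) = setT.
  apply/eqP; rewrite eqEsubset subsetT /=; apply/subsetP => -[w b] _.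
  have [s sA sw] := opair_Alt_trans w01 w.
  pose c := toggle w01 (std_signs s w01 (+) b) (std_signs s).
  have cs : coherent s c by apply/coherent_toggle/coherent_std.
  have cb : c w01 = b by rewrite toggle_at addKb.
  apply/orbitP; exists (sign_perm s c).
    by have xH := mem_lifts sA cs; apply: (mem_morphim lift_fst xH xH).
  by rewrite -[LHS]/(sign_perm s c (w01, false)) sign_permE sw cb.
exact: atrans_orbit.
Qed.

End FourPoints.

End SignedPairs.

Theorem theorem4p4 (k : nat) (hk : 7 <= k) :
  exists (gT : finGroupType) (H M : {group gT}),
    [/\ [/\ M <| H, M :!=: 1 & 2.-abelem M],
        H / M \isog 'Alt_('I_k),
        ~~ [splits H, over M] &
        (exists (T : finType) (phi : {morphism H >-> {perm T}}),
          [/\ 'injm phi, [transitive phi @* H, on [set: T] | 'P]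
            & #|T| <= 2 * k * (k - 1)])].
Proof.
have k_gt3 : 3 < k by apply: leq_trans hk.
have k_gt1 : 1 < k by apply: ltn_trans k_gt3.
exists _, (lifts_group k), ('ker (@lift_proj k))%G; split.
- by rewrite ker_normal ker_lift_neq1 ?ker_lift_abelem.
- by rewrite -lift_proj_im; apply: first_isog.
- exact: lifts_nonsplit.
exists (spair k), (@lift_fst k); split.
- exact: injm_lift_fst.
- exact: lift_fst_trans.
- by rewrite card_spair.
Qed.
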